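(* Under the assumptions of Lemma lem:Y (Hypothesis (N1), one of (S1), (S2), (S3), initial datum $x\in\mathbb R^n_+\setminus\{0\}$, no extraction), the solution of $X'(t)=\varphi(\langle\mathbf e,X(t)\rangle)X(t)+(D+B^\top)X(t)$, $X(0)=x$, satisfies $$\lim_{t\to\infty}X(t)=\bar m\,\langle\mathbf e,\zeta\rangle^{-1}\zeta,$$ where $\bar m$ is $K^{\frac1{\sigma-1}}$ under (S1), $\delta^{\frac1{\sigma-1}}$ under (S2), $e^K$ under (S3); in particular the limit lies in $\{x\in\mathbb R^n: x_1+\dots+x_n=\bar m,\ x_i\ge0\}$.
   Context: Let $n\ge 2$, $N=\{1,\dots,n\}$, $\mathbf e=(1,\dots,1)^\top$, $\langle\cdot,\cdot\rangle$ the Euclidean inner product; $\mathbb R^n_+=\{x: x_i\ge0\ \forall i\}$. Hypothesis (N1): $B=(b_{ij})$ is a real $n\times n$ matrix with $b_{ij}\ge0$, $b_{ii}=0$ ($b_{ij}X_i$ is the flow from node $i$ to node $j$), and the directed graph with an edge $i\to j$ iff $b_{ij}>0$ is strongly connected; $D$ is the diagonal matrix with $D_{ii}=-\sum_{j\ne i}b_{ij}$. $\zeta$ denotes a vector with all coordinates strictly positive spanning the kernel of $D+B^\top$. Parameters $\Gamma>0$, $K>0$, $\delta>0$. Growth specifications: (S1) $\sigma>1$, $\varphi(m)=\Gamma(1-\frac1K m^{\sigma-1})$; (S2) $0<\sigma<1$, $\varphi(m)=m^{\sigma-1}-\delta$; (S3) $\varphi(m)=\Gamma(1-\frac1K\ln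 m)$. *)

From HB Require Import structures.
From mathcomp Require Import all_boot all_order all_algebra.
From mathcomp Require Import all_classical all_reals all_analysis.
Set Implicit Arguments. Unset Strict Implicit. Unset Printing Implicit Defensive.
Import Order.TTheory GRing.Theory Num.Theory.
Import numFieldNormedType.Exports.
Local Open Scope ring_scope.
Local Open Scope classical_set_scope.

Definition N1 (R : realType) (n : nat) (B : 'M[R]_n) : Prop :=
  (forall i j, 0 <= B i j) /\ (forall i, B i i = 0) /\
  (forall i j, connect (fun k l => 0 < B k l) i j).

Definition Dmat (R : realType) (n : nat) (B : 'M[R]_n) : 'M[R]_n :=
  \matrix_(i, j) (if i == j then - \sum_(k < n | k != i) B i k else 0).

Definition Amat (R : realType) (n : nat) (B : 'M[R]_n) : 'M[R]_n :=
  Dmat B + B^T.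

Inductive spec := S1 | S2 | S3.

Definition spec_ok (R : realType) (s : spec) (sigma : R) : Prop :=
  match s with
  | S1 => 1 < sigma
  | S2 => 0 < sigma < 1
  | S3 => True
  end.

(* growth function phi (defined for m > 0) *)
Definition phi (R : realType) (s : spec) (Gamma K delta sigma : R) (m : R) : R :=
  match s with
  | S1 => Gamma * (1 - K^-1 * m `^ (sigma - 1))
  | S2 => m `^ (sigma - 1) - delta
  | S3 => Gamma * (1 - K^-1 * ln m)
  end.

Definition mbar (R : realType) (s : spec) (K delta sigma : R) : R :=
  match s with
  | S1 => K `^ ((sigma - 1)^-1)
  | S2 => delta `^ ((sigma - 1)^-1)
  | S3 => expR K
  end.

Definition mass (R : realType) (n : nat) (v : 'I_n -> R) : R := \sum_(i < n) v i.

(* X (given coordinatewise, X i : R -> R) is a solution on [0, +oo) of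
   X' = phi(<e,X>) X + (D + B^T) X,  X(0) = x. Since phi is only defined for
   positive total mass, a solution keeps <e, X(t)> > 0. *)
Definition is_solution (R : realType) (n : nat) (B : 'M[R]_n) (f : R -> R)
    (x : 'I_n -> R) (X : 'I_n -> R -> R) : Prop :=
  (forall i, X i 0 = x i) /\
  (forall i, X i t @[t --> 0^'+] --> x i) /\
  (forall t, 0 <= t -> 0 < mass (fun i => X i t)) /\
  (forall t, 0 < t -> forall i,
      derivable (X i) t 1 /\
      (X i)^`() t = f (mass (fun j => X j t)) * X i t
                    + \sum_(j < n) Amat B i j * X j t).

From HB Require Import structures.
From mathcomp Require Import all_boot all_order all_algebra.
From mathcomp Require Import all_classical all_reals all_analysis.
From mathcomp Require Import ring lra.
Import Order.TTheory GRing.Theory Num.Theory.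
Import numFieldNormedType.Exports.
Local Open Scope ring_scope.
Local Open Scope classical_set_scope.

(* The columns of D + B^T sum to zero, so the total mass M = <e, X> solves the
   scalar equation M' = phi(M) M.  For each specification L = ln M - ln mbar
   then solves L' = g(L) with L g(L) < 0 for L <> 0, hence L^2 is a Lyapunov
   function and M tends to mbar.  The profile Y = X / M solves the linear
   equation Y' = (D + B^T) Y with <e, Y> = 1.  Writing Y = zeta/<e,zeta> + zeta u,
   the energy sum_i zeta_i u_i^2 decreases at the rate of a Dirichlet form
   sum_ij a_ij zeta_j (u_i - u_j)^2; by strong connectivity this form dominates
   every (u_i - u_j)^2 (a Poincare inequality along paths), hence the energy,
   so it decays exponentially and Y tends to zeta/<e,zeta>. *)

Set Implicit Arguments. Unset Strict Implicit. Unset Printing Implicit Defensive.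

Section ScalarDecay.
Variable R : realType.
Implicit Types t : R.

Lemma cvg_pinfty_eq (f g : R -> R) (l : R) :
  (forall t, 1 <= t -> f t = g t) ->
  g t @[t --> +oo] --> l -> f t @[t --> +oo] --> l.
Proof.
move=> efg; apply: cvg_trans; apply: near_eq_cvg.
near=> t; apply/esym/efg.
by near: t; apply: nbhs_pinfty_ge; apply: num_real.
Unshelve. all: end_near.
Qed.

Lemma le_expR_decay (s : R) (V dV : R -> R) (lam : R) :
  (forall t, s <= t -> is_derive t 1 V (dV t)) ->
  (forall t, s <= t -> dV t <= - lam * V t) ->
  forall t0 t, s <= t0 -> t0 <= t -> V t <= V t0 * expR (lam * (t0 - t)).
Proof.
move=> dV_V dV_le t0 t st0 t0t.
pose W u := V u * expR (lam * u).
have dW u : s <= u ->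
    is_derive u 1 W (V u * (expR (lam * u) * lam) + expR (lam * u) * dV u).
  move=> su.
  have dlin : is_derive u 1 (fun u : R => lam * u) lam.
    by have := is_deriveZ lam (is_derive_id u 1); rewrite /GRing.scale /= mulr1.
  have dexp : is_derive u 1 (fun u => expR (lam * u)) (expR (lam * u) * lam).
    exact: (is_derive1_comp (f := expR) (g := fun u : R => lam * u)).
  exact: is_deriveM (dV_V u su) dexp.
have W_noninc : {in `[t0, t]%R &, {homo W : x y /~ x <= y}}.
  apply: (@ler0_derive1_le_cc R W t0 t).
  - move=> u; rewrite in_itv /= => /andP[t0u _].
    by have [] := dW u (le_trans st0 (ltW t0u)).
  - move=> u; rewrite in_itv /= => /andP[t0u _].
    have su : s <= u by apply: le_trans (ltW t0u).
    rewrite derive1E (@derive_val _ _ _ _ _ _ _ (dW u su)).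
    have e_gt0 := expR_gt0 (lam * u).
    have : expR (lam * u) * dV u <= expR (lam * u) * (- lam * V u).
      by rewrite ler_pM2l // dV_le.
    rewrite /GRing.scale /=; nra.
  - apply: derivable_within_continuous => u; rewrite in_itv /= => /andP[t0u _].
    by have [] := dW u (le_trans st0 t0u).
have := W_noninc t t0; rewrite !in_itv /= !lexx t0t => /(_ isT isT isT).
rewrite /W -(ler_pM2r (expR_gt0 (- (lam * t)))) -!mulrA -!expRD.
by rewrite subrr expR0 mulr1 mulrBr.
Qed.

Lemma cvg0_expR_decay (V dV : R -> R) (lam : R) : 0 < lam ->
  (forall t, 1 <= t -> is_derive t 1 V (dV t)) ->
  (forall t, 1 <= t -> dV t <= - lam * V t) ->
  (forall t, 1 <= t -> 0 <= V t) ->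
  V t @[t --> +oo] --> 0.
Proof.
move=> lam_gt0 dV_V dV_le V_ge0; apply/cvgrPdist_le => e e_gt0.
have le_gt0 : 0 < lam * e by rewrite mulr_gt0.
near=> t.
have t_big : 1 + V 1 / (lam * e) <= t.
  by near: t; apply: nbhs_pinfty_ge; apply: num_real.
have V1_ge0 : 0 <= V 1 by apply: V_ge0.
have t_ge1 : 1 <= t.
  by apply: le_trans t_big; rewrite lerDl divr_ge0 // ltW.
rewrite sub0r normrN ger0_norm ?V_ge0 //.
apply: le_trans (le_expR_decay dV_V dV_le (lexx 1) t_ge1) _.
have -> : lam * (1 - t) = - (lam * (t - 1)) by ring.
rewrite expRN ler_pdivrMr ?expR_gt0 //.
have := expR_ge1Dx (lam * (t - 1)).
have : V 1 <= lam * e * (t - 1).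
  by rewrite -ler_pdivrMl // mulrC lerBrDl addrC.
have : 0 <= lam * (t - 1) by rewrite mulr_ge0 ?subr_ge0 // ltW.
nra.
Unshelve. all: end_near.
Qed.

Lemma cvgr0_sqr (L : R -> R) :
  (L t * L t) @[t --> +oo] --> 0 -> L t @[t --> +oo] --> 0.
Proof.
move=> /cvgrPdist_lt L2_cvg; apply/cvgrPdist_lt => e e_gt0.
apply: filter_app (L2_cvg (e * e) (mulr_gt0 e_gt0 e_gt0)); near=> t.
rewrite !sub0r !normrN ger0_norm -?expr2 ?sqr_ge0 // expr2 => L2_lt.
by apply/ltr_normlP; split; nra.
Unshelve. all: end_near.
Qed.

Lemma cvg0_sqr_Lyapunov (L dL : R -> R) :
  (forall t, 1 <= t -> is_derive t 1 L (dL t)) ->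
  (forall t, 1 <= t -> L t * dL t <= 0) ->
  (forall c, exists2 lam, 0 < lam & forall t, 1 <= t ->
      L t * L t <= c -> L t * dL t <= - lam * (L t * L t)) ->
  L t @[t --> +oo] --> 0.
Proof.
move=> dL_L LdL_le0 LdL_le.
pose G t := L t * L t.
pose dG t := L t * dL t + L t * dL t.
have dG_G t : 1 <= t -> is_derive t 1 G (dG t).
  by move=> t1; exact: is_deriveM (dL_L t t1) (dL_L t t1).
have G_le t : 1 <= t -> G t <= G 1.
  move=> t1; have := le_expR_decay (lam := 0) dG_G _ (lexx 1) t1.
  rewrite mul0r expR0 mulr1; apply=> u u1.
  by have := LdL_le0 u u1; rewrite /dG oppr0 mul0r; lra.
have [lam lam_gt0 hlam] := LdL_le (G 1).
apply/cvgr0_sqr/(cvg0_expR_decay (lam := 2 * lam)) => //.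
- by rewrite mulr_gt0.
- by move=> t t1; have := hlam t t1 (G_le t t1); rewrite /dG /G; lra.
- by move=> t _; rewrite /G -expr2 sqr_ge0.
Qed.

Lemma expR_sub1_lower (y c : R) : y * y <= c ->
  expR (- (1 + c)) * (y * y) <= y * (expR y - 1).
Proof.
move=> y2_le.
have e1 := expR_ge1Dx y.
have e0 := expR_gt0 (- (1 + c)).
have y2_ge0 : 0 <= y * y by rewrite -expr2 sqr_ge0.
have [y_ge0|y_lt0] := leP 0 y.
  have : expR (- (1 + c)) <= 1 by rewrite expR_le1; nra.
  nra.
have e2 := expR_ge1Dx (- y).
have ey := expR_gt0 y.
have eyN : expR y * expR (- y) = 1 by rewrite -expRD subrr expR0.
have : expR (- (1 + c)) <= expR y by rewrite ler_expR; nra.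
have : expR y - 1 <= y * expR y by nra.
nra.
Qed.

(* [L^2] is nonincreasing, hence bounded, and on bounded sets
   [expR_sub1_lower] makes [L (expR (a L) - 1)] comparable to [L^2]. *)
Lemma cvg0_expR_ode (L dL : R -> R) (k a : R) : k * a < 0 ->
  (forall t, 1 <= t -> is_derive t 1 L (dL t)) ->
  (forall t, 1 <= t -> dL t = k * (expR (a * L t) - 1)) ->
  L t @[t --> +oo] --> 0.
Proof.
move=> ka_lt0 dL_L dLE; have a_neq0 : a != 0.
  by apply: contraTneq ka_lt0 => ->; rewrite mulr0 ltxx.
have a2_gt0 : 0 < a * a by rewrite -expr2 exprn_even_gt0.
have LdLE t : 1 <= t -> (a * a) * (L t * dL t) =
    (k * a) * (a * L t * (expR (a * L t) - 1)).
  by move=> t1; rewrite dLE //; ring.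
apply: cvg0_sqr_Lyapunov dL_L _ _ => [t t1|c].
  rewrite -(ler_pM2l a2_gt0) mulr0 LdLE // nmulr_rle0 //.
  have := expR_sub1_lower (lexx (a * L t * (a * L t))).
  by apply: le_trans; rewrite mulr_ge0 ?expR_ge0 // -expr2 sqr_ge0.
exists (- (k * a) * expR (- (1 + a * a * c))).
  by rewrite mulr_gt0 ?expR_gt0 // oppr_gt0.
move=> t t1 L2_le; rewrite -(ler_pM2l a2_gt0) LdLE //.
have aL2_le : a * L t * (a * L t) <= a * a * c.
  by rewrite mulrACA ler_pM2l.
have bound := expR_sub1_lower aL2_le; rewrite -(ler_nM2l ka_lt0) in bound.
apply: le_trans bound _; rewrite le_eqVlt; apply/orP; left; apply/eqP; ring.
Qed.

Lemma cvg0_linear_ode (L dL : R -> R) (k : R) : 0 < k ->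
  (forall t, 1 <= t -> is_derive t 1 L (dL t)) ->
  (forall t, 1 <= t -> dL t = - k * L t) ->
  L t @[t --> +oo] --> 0.
Proof.
move=> k_gt0 dL_L dLE; apply: cvg0_sqr_Lyapunov dL_L _ _ => [t t1|c].
  by rewrite dLE // mulrCA mulNr oppr_le0 pmulr_rge0 // -expr2 sqr_ge0.
by exists k => // t t1 _; rewrite dLE // mulrCA.
Qed.

End ScalarDecay.

Section TotalMass.
Variable R : realType.
Implicit Types t : R.

(* (S1) and (S2) give the first shape with [a = sigma - 1], (S3) the second. *)
Definition relaxes_to (f : R -> R) (mb : R) :=
  (exists k a : R, k * a < 0 /\
     forall m, 0 < m -> f m = k * (expR (a * (ln m - ln mb)) - 1)) \/
  (exists k : R, 0 < k /\ forall m, 0 < m -> f m = - k * (ln m - ln mb)).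

Lemma cvg_relaxes_to (f : R -> R) (mb : R) (M : R -> R) :
  0 < mb -> relaxes_to f mb ->
  (forall t, 0 < t -> 0 < M t) ->
  (forall t, 0 < t -> is_derive t 1 M (f (M t) * M t)) ->
  M t @[t --> +oo] --> mb.
Proof.
move=> mb_gt0 f_relax M_gt0 dM.
have M1_gt0 t : 1 <= t -> 0 < M t by move=> t1; apply/M_gt0/(lt_le_trans ltr01).
pose L t := ln (M t) - ln mb.
have dL t : 1 <= t -> is_derive t 1 L (f (M t)).
  move=> t1; have Mt_gt0 := M1_gt0 t t1.
  have dlnM := is_derive1_comp (is_derive1_ln Mt_gt0) (dM t (lt_le_trans ltr01 t1)).
  apply: is_derive_eq (is_deriveB dlnM (is_derive_cst (ln mb) t 1)) _.
  by rewrite subr0 mulrCA mulVf ?mulr1 // gt_eqF.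
have L_cvg : L t @[t --> +oo] --> 0.
  case: f_relax => [[k [a [ka_lt0 fE]]]|[k [k_gt0 fE]]].
  - by apply: cvg0_expR_ode ka_lt0 dL _ => t t1; rewrite fE ?M1_gt0.
  - by apply: cvg0_linear_ode k_gt0 dL _ => t t1; rewrite fE ?M1_gt0.
have : expR (L t + ln mb) @[t --> +oo] --> expR (0 + ln mb).
  by apply: continuous_cvg; [exact: continuous_expR | apply: cvgD; last exact: cvg_cst].
rewrite add0r lnK ?posrE //; apply: cvg_pinfty_eq => t t1.
by rewrite /L subrK lnK // posrE M1_gt0.
Qed.

Lemma mbar_gt0 (s : spec) (K delta sigma : R) :
  0 < K -> 0 < delta -> 0 < mbar s K delta sigma.
Proof. by move=> K_gt0 d_gt0; case: s => /=; rewrite ?powR_gt0 ?expR_gt0. Qed.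

Lemma phi_relaxes_to_mbar (s : spec) (Gamma K delta sigma : R) :
  0 < Gamma -> 0 < K -> 0 < delta -> spec_ok s sigma ->
  relaxes_to (phi s Gamma K delta sigma) (mbar s K delta sigma).
Proof.
move=> G_gt0 K_gt0 d_gt0; case: s => /= hs.
- left; exists (- Gamma), (sigma - 1); split.
    by rewrite mulNr oppr_lt0 mulr_gt0 // subr_gt0.
  move=> m m_gt0 /=; rewrite /powR gt_eqF // ln_powR.
  have -> : (sigma - 1) * (ln m - (sigma - 1)^-1 * ln K) = (sigma - 1) * ln m - ln K.
    by field; rewrite subr_eq0 gt_eqF.
  by rewrite expRD expRN lnK ?posrE //; field; rewrite gt_eqF.
- left; exists delta, (sigma - 1); case/andP: hs => _ sigma_lt1; split.
    by rewrite pmulr_rlt0 // subr_lt0.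
  move=> m m_gt0 /=; rewrite /powR gt_eqF // ln_powR.
  have -> : (sigma - 1) * (ln m - (sigma - 1)^-1 * ln delta) =
            (sigma - 1) * ln m - ln delta.
    by field; rewrite subr_eq0 lt_eqF.
  by rewrite expRD expRN lnK ?posrE //; field; rewrite gt_eqF.
- right; exists (Gamma / K); split; first by rewrite divr_gt0.
  by move=> m m_gt0 /=; rewrite expRK; field; rewrite gt_eqF.
Qed.

End TotalMass.

Lemma is_derive_sum_fun (R : realType) (n : nat) (h : 'I_n -> R -> R)
    (dh : 'I_n -> R) (t : R) :
  (forall i, is_derive t 1 (h i) (dh i)) ->
  is_derive t 1 (fun s => \sum_(i < n) h i s) (\sum_(i < n) dh i).
Proof. by move=> dh_h; rewrite -fct_sumE; exact: is_derive_sum. Qed.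

Section LinearProfile.
Variables (R : realType) (n : nat) (A : 'M[R]_n) (zeta : 'I_n -> R).
Hypothesis A_zeta : forall i, \sum_(j < n) A i j * zeta j = 0.
Hypothesis A_col0 : forall j, \sum_(i < n) A i j = 0.
Hypothesis zeta_gt0 : forall i, 0 < zeta i.
Hypothesis A_offdiag_ge0 : forall i j, i != j -> 0 <= A i j.
Hypothesis A_connect : forall i j, connect (fun k l => 0 < A l k) i j.
Hypothesis zeta_mass_gt0 : 0 < \sum_(i < n) zeta i.
Implicit Types t : R.

Definition dirichlet (u : 'I_n -> R) :=
  \sum_(i < n) \sum_(j < n) A i j * zeta j * ((u i - u j) * (u i - u j)).

Lemma dirichlet_bilinear (u : 'I_n -> R) :
  \sum_(i < n) \sum_(j < n) A i j * zeta j * (u i * u j) = - dirichlet u / 2.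
Proof.
have -> : dirichlet u =
    \sum_(i < n) \sum_(j < n) (u i * u i) * (A i j * zeta j)
  + \sum_(i < n) \sum_(j < n) (zeta j * (u j * u j)) * A i j
  - 2 * \sum_(i < n) \sum_(j < n) A i j * zeta j * (u i * u j).
  rewrite /dirichlet mulr_sumr -sumrN -!big_split /=; apply: eq_bigr => i _.
  by rewrite mulr_sumr -sumrN -!big_split /=; apply: eq_bigr => j _; ring.
have -> : \sum_(i < n) \sum_(j < n) (u i * u i) * (A i j * zeta j) = 0.
  by rewrite big1 // => i _; rewrite -mulr_sumr A_zeta mulr0.
have -> : \sum_(i < n) \sum_(j < n) (zeta j * (u j * u j)) * A i j = 0.
  by rewrite exchange_big big1 //= => j _; rewrite -mulr_sumr A_col0 mulr0.
by rewrite add0r; field.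
Qed.

Lemma dirichlet_term_ge0 (u : 'I_n -> R) i j :
  0 <= A i j * zeta j * ((u i - u j) * (u i - u j)).
Proof.
have [->|ij] := eqVneq i j; first by rewrite subrr !mulr0.
apply: mulr_ge0; last by rewrite -expr2 sqr_ge0.
by rewrite mulr_ge0 ?A_offdiag_ge0 ?ltW.
Qed.

Lemma dirichlet_ge0 (u : 'I_n -> R) : 0 <= dirichlet u.
Proof. by do 2![apply: sumr_ge0 => ? _]; exact: dirichlet_term_ge0. Qed.

Lemma dirichlet_edge (u : 'I_n -> R) k l : 0 < A l k ->
  (u k - u l) * (u k - u l) <= (A l k * zeta k)^-1 * dirichlet u.
Proof.
move=> Alk_gt0; rewrite ler_pdivlMl ?mulr_gt0 //.
have -> : (u k - u l) * (u k - u l) = (u l - u k) * (u l - u k) by ring.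
rewrite /dirichlet (bigD1 l) //= (bigD1 k) //= -addrA lerDl.
rewrite addr_ge0 //; first by apply: sumr_ge0 => j _; exact: dirichlet_term_ge0.
by do 2![apply: sumr_ge0 => ? _]; exact: dirichlet_term_ge0.
Qed.

Lemma dirichlet_path (x : 'I_n) (p : seq 'I_n) :
  path (fun k l => 0 < A l k) x p ->
  exists2 C, 0 <= C & forall u,
    (u x - u (last x p)) * (u x - u (last x p)) <= C * dirichlet u.
Proof.
elim: p x => [|y p IHp] x /=.
  by move=> _; exists 0 => // u; rewrite subrr mulr0 mul0r.
case/andP=> Ayx_gt0 /IHp[C C_ge0 hC].
exists (2 * (A y x * zeta x)^-1 + 2 * C).
  by rewrite addr_ge0 // mulr_ge0 // ltW // invr_gt0 mulr_gt0.
move=> u; have edge := dirichlet_edge u Ayx_gt0; have tail := hC u.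
set a := u x - u y in edge *; set b := u y - u (last y p) in tail *.
have -> : u x - u (last y p) = a + b by rewrite /a /b; ring.
have : 0 <= dirichlet u := dirichlet_ge0 u.
have : 0 <= (a - b) * (a - b) by rewrite -expr2 sqr_ge0.
nra.
Qed.

Lemma poincare_dirichlet :
  exists2 C, 0 < C & forall u i j, (u i - u j) * (u i - u j) <= C * dirichlet u.
Proof.
have pair_bound (ij : 'I_n * 'I_n) : exists C : R, 0 <= C /\ forall u,
    (u ij.1 - u ij.2) * (u ij.1 - u ij.2) <= C * dirichlet u.
  case: ij => i j /=; have /connectP[p ip ->] := A_connect i j.
  by have [C C_ge0 hC] := dirichlet_path ip; exists C.
have [c hc] := choice pair_bound.
have c_le_sum ij : c ij <= \sum_(kl : 'I_n * 'I_n) c kl.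
  by rewrite (bigD1 ij) //= lerDl sumr_ge0 // => kl _; case: (hc kl).
exists (1 + \sum_(kl : 'I_n * 'I_n) c kl).
  by rewrite ltr_pwDl // sumr_ge0 // => kl _; case: (hc kl).
move=> u i j; have [_ hcij] := hc (i, j).
apply: le_trans (hcij u) _; rewrite ler_wpM2r ?dirichlet_ge0 //.
by apply: le_trans (c_le_sum (i, j)) _; rewrite lerDr.
Qed.

Let Z := \sum_(i < n) zeta i.

Definition deviation (y : 'I_n -> R) i := (zeta i)^-1 * (y i - zeta i / Z).

Definition energy (y : 'I_n -> R) :=
  \sum_(i < n) zeta i * (deviation y i * deviation y i).

Lemma zeta_deviation (y : 'I_n -> R) i : zeta i * deviation y i = y i - zeta i / Z.
Proof. by rewrite /deviation mulrA mulfV ?mul1r // gt_eqF. Qed.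

Lemma A_mul_deviation (y : 'I_n -> R) i :
  \sum_(j < n) A i j * y j = \sum_(j < n) A i j * zeta j * deviation y j.
Proof.
under [RHS]eq_bigr do rewrite -mulrA zeta_deviation mulrBr mulrA.
by rewrite sumrB -mulr_suml A_zeta mul0r subr0.
Qed.

Lemma is_derive_energy (Y : 'I_n -> R -> R) t :
  (forall i, is_derive t 1 (Y i) (\sum_(j < n) A i j * Y j t)) ->
  is_derive t 1 (fun s => energy (Y^~ s)) (- dirichlet (deviation (Y^~ t))).
Proof.
move=> dY; set u := deviation (Y^~ t).
have du i : is_derive t 1 (fun s => deviation (Y^~ s) i)
                         ((zeta i)^-1 * \sum_(j < n) A i j * Y j t).
  apply: is_derive_eq (is_deriveZ _ (is_deriveB (dY i) (is_derive_cst _ t 1))) _.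
  by rewrite subr0.
have dterm i := is_deriveZ (zeta i) (is_deriveM (du i) (du i)).
apply: is_derive_eq (is_derive_sum_fun dterm) _.
have -> : - dirichlet u = 2 * (- dirichlet u / 2) by field.
rewrite -dirichlet_bilinear mulr_sumr; apply: eq_bigr => i _.
rewrite /GRing.scale /= A_mul_deviation -/u.
have -> : \sum_(j < n) A i j * zeta j * (u i * u j) =
          u i * \sum_(j < n) A i j * zeta j * u j.
  by rewrite mulr_sumr; apply: eq_bigr => j _; ring.
by field; rewrite gt_eqF.
Qed.

Lemma weighted_pair_sqr_sum (u : 'I_n -> R) :
  \sum_(i < n) \sum_(j < n) zeta i * zeta j * ((u i - u j) * (u i - u j)) =
  2 * Z * (\sum_(i < n) zeta i * (u i * u i))
  - 2 * ((\sum_(i < n) zeta i * u i) * (\sum_(i < n) zeta i * u i)).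
Proof.
have -> : \sum_(i < n) \sum_(j < n) zeta i * zeta j * ((u i - u j) * (u i - u j)) =
    \sum_(i < n) \sum_(j < n) (zeta i * (u i * u i)) * zeta j
  + \sum_(i < n) \sum_(j < n) zeta i * (zeta j * (u j * u j))
  - 2 * \sum_(i < n) \sum_(j < n) (zeta i * u i) * (zeta j * u j).
  rewrite mulr_sumr -sumrN -!big_split /=; apply: eq_bigr => i _.
  by rewrite mulr_sumr -sumrN -!big_split /=; apply: eq_bigr => j _; ring.
have -> : \sum_(i < n) \sum_(j < n) (zeta i * (u i * u i)) * zeta j =
    (\sum_(i < n) zeta i * (u i * u i)) * Z.
  by rewrite mulr_suml; apply: eq_bigr => i _; rewrite mulr_sumr.
have -> : \sum_(i < n) \sum_(j < n) zeta i * (zeta j * (u j * u j)) =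
    Z * (\sum_(i < n) zeta i * (u i * u i)).
  by rewrite mulr_suml; apply: eq_bigr => i _; rewrite mulr_sumr.
have -> : \sum_(i < n) \sum_(j < n) (zeta i * u i) * (zeta j * u j) =
    (\sum_(i < n) zeta i * u i) * (\sum_(i < n) zeta i * u i).
  by rewrite mulr_suml; apply: eq_bigr => i _; rewrite mulr_sumr.
ring.
Qed.

Lemma energy_dissipation : exists2 lam, 0 < lam & forall y : 'I_n -> R,
  \sum_(i < n) y i = 1 -> lam * energy y <= dirichlet (deviation y).
Proof.
have [C C_gt0 hC] := poincare_dirichlet.
exists (2 / (C * Z)); first by rewrite divr_gt0 // mulr_gt0.
move=> y y_sum1; set u := deviation y.
have u_mean0 : \sum_(i < n) zeta i * u i = 0.
  under eq_bigr do rewrite zeta_deviation.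
  by rewrite sumrB y_sum1 -mulr_suml mulfV ?subrr // gt_eqF.
have pairs : \sum_(i < n) \sum_(j < n) zeta i * zeta j * ((u i - u j) * (u i - u j))
    = 2 * Z * energy y.
  by rewrite weighted_pair_sqr_sum u_mean0 mul0r mulr0 subr0.
have energy_le : 2 * Z * energy y <= Z * Z * (C * dirichlet u).
  rewrite -pairs mulr_suml mulr_suml; apply: ler_sum => i _.
  rewrite mulr_sumr mulr_suml; apply: ler_sum => j _.
  by rewrite ler_wpM2l // mulr_ge0 // ltW.
have -> : 2 / (C * Z) * energy y = 2 * Z * energy y / (Z * Z * C).
  by field; rewrite !gt_eqF.
rewrite ler_pdivrMr ?mulr_gt0 //; apply: le_trans energy_le _.
by rewrite mulrA [leRHS]mulrC.
Qed.

Lemma energy_term_ge0 (y : 'I_n -> R) i :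
  0 <= zeta i * (deviation y i * deviation y i).
Proof. by apply: mulr_ge0; [exact: ltW | rewrite -expr2 sqr_ge0]. Qed.

Lemma energy_ge0 (y : 'I_n -> R) : 0 <= energy y.
Proof. by apply: sumr_ge0 => i _; exact: energy_term_ge0. Qed.

Lemma sqr_sub_equilibrium_le (y : 'I_n -> R) i :
  (y i - zeta i / Z) * (y i - zeta i / Z) <= zeta i * energy y.
Proof.
rewrite -!zeta_deviation /energy (bigD1 i) //= mulrDr.
have -> : zeta i * deviation y i * (zeta i * deviation y i) =
          zeta i * (zeta i * (deviation y i * deviation y i)) by ring.
rewrite lerDl; apply: mulr_ge0; first exact: ltW.
by apply: sumr_ge0 => j _; exact: energy_term_ge0.
Qed.

Lemma profile_cvg (Y : 'I_n -> R -> R) :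
  (forall t, 0 < t -> forall i, is_derive t 1 (Y i) (\sum_(j < n) A i j * Y j t)) ->
  (forall t, 0 < t -> \sum_(i < n) Y i t = 1) ->
  forall i, Y i t @[t --> +oo] --> zeta i / Z.
Proof.
move=> dY Y_sum1 i.
have [lam lam_gt0 dissip] := energy_dissipation.
have energy_cvg : energy (Y^~ t) @[t --> +oo] --> 0.
  apply: (cvg0_expR_decay (lam := lam)) => // [t t1|t t1|t _]; last exact: energy_ge0.
    exact/is_derive_energy/dY/(lt_le_trans ltr01).
  by rewrite mulNr lerN2 dissip ?Y_sum1 // (lt_le_trans ltr01).
have dev_cvg : (Y i t - zeta i / Z) @[t --> +oo] --> 0.
  apply: cvgr0_sqr; apply: (squeeze_cvgr (f := cst 0) (h := fun t => zeta i * energy (Y^~ t))).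
  - by near=> t; rewrite /= -expr2 sqr_ge0 sqr_sub_equilibrium_le.
  - exact: cvg_cst.
  - by rewrite -(mulr0 (zeta i)); apply: cvgM => //; exact: cvg_cst.
rewrite -[X in _ --> X]add0r.
by apply: cvg_pinfty_eq (cvgD dev_cvg (cvg_cst _)) => t _; rewrite subrK.
Unshelve. all: end_near.
Qed.

End LinearProfile.

Section Generator.
Variables (R : realType) (n : nat) (B : 'M[R]_n).
Hypothesis B_N1 : N1 B.

Lemma Amat_offdiag i j : i != j -> Amat B i j = B j i.
Proof. by move=> ij; rewrite /Amat !mxE (negbTE ij) add0r. Qed.

Lemma Amat_col_sum0 j : \sum_(i < n) Amat B i j = 0.
Proof.
have [_ [B_diag _]] := B_N1.
under eq_bigr do rewrite !mxE.
rewrite big_split /= -big_mkcond /= big_pred1_eq.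
by rewrite [X in _ + X](bigD1 j) //= B_diag add0r addNr.
Qed.

Lemma Amat_offdiag_ge0 i j : i != j -> 0 <= Amat B i j.
Proof. by have [B_ge0 _] := B_N1; move=> ij; rewrite Amat_offdiag. Qed.

Lemma Amat_connect i j : connect (fun k l => 0 < Amat B l k) i j.
Proof.
have [_ [B_diag B_conn]] := B_N1.
apply: connect_sub (B_conn i j) => k l Bkl; apply: connect1.
have lk : l != k by apply: contraTneq Bkl => ->; rewrite B_diag ltxx.
by rewrite Amat_offdiag.
Qed.

End Generator.

Section MassAndProfile.
Variables (R : realType) (n : nat) (A : 'M[R]_n) (f : R -> R) (X : 'I_n -> R -> R).
Implicit Types t : R.
Hypothesis A_col0 : forall j, \sum_(i < n) A i j = 0.
Hypothesis dX : forall t, 0 < t -> forall i, is_derive t 1 (X i)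
  (f (mass (X^~ t)) * X i t + \sum_(j < n) A i j * X j t).
Hypothesis mass_gt0 : forall t, 0 < t -> 0 < mass (X^~ t).

Lemma is_derive_mass t : 0 < t ->
  is_derive t 1 (fun s => mass (X^~ s)) (f (mass (X^~ t)) * mass (X^~ t)).
Proof.
move=> t_gt0; apply: is_derive_eq (is_derive_sum_fun (dX t_gt0)) _.
rewrite big_split /= -mulr_sumr exchange_big /= [X in _ + X]big1 ?addr0 // => j _.
by rewrite -mulr_suml A_col0 mul0r.
Qed.

Lemma is_derive_profile t : 0 < t -> forall i,
  is_derive t 1 (fun s => X i s / mass (X^~ s))
    (\sum_(j < n) A i j * (X j t / mass (X^~ t))).
Proof.
move=> t_gt0 i; have M_neq0 : mass (X^~ t) != 0 by rewrite gt_eqF // mass_gt0.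
have dXM := is_deriveM (dX t_gt0 i) (is_deriveV M_neq0 (is_derive_mass t_gt0)).
apply: (is_derive_eq (f := fun s => X i s / mass (X^~ s)) dXM).
under [RHS]eq_bigr do rewrite mulrA.
by rewrite -mulr_suml /GRing.scale /=; field.
Qed.

Lemma profile_sum1 t : 0 < t -> \sum_(i < n) X i t / mass (X^~ t) = 1.
Proof. by move=> t_gt0; rewrite -mulr_suml mulfV // gt_eqF // mass_gt0. Qed.

End MassAndProfile.

Unset Implicit Arguments.

Theorem mainTheorem3 (R : realType) (n : nat) (B : 'M[R]_n) (zeta : 'I_n -> R)
    (s : spec) (Gamma K delta sigma : R) (x : 'I_n -> R) (X : 'I_n -> R -> R) :
  (2 <= n)%N ->
  N1 B ->
  (forall i, 0 < zeta i) ->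
  (forall i, \sum_(j < n) Amat B i j * zeta j = 0) ->
  (forall v : 'I_n -> R, (forall i, \sum_(j < n) Amat B i j * v j = 0) ->
     exists c : R, forall i, v i = c * zeta i) ->
  0 < Gamma -> 0 < K -> 0 < delta -> spec_ok s sigma ->
  (forall i, 0 <= x i) -> (exists i, x i != 0) ->
  is_solution B (phi s Gamma K delta sigma) x X ->
  (forall i, X i t @[t --> +oo] -->
       mbar s K delta sigma * (mass zeta)^-1 * zeta i) /\
  (mass (fun i => mbar s K delta sigma * (mass zeta)^-1 * zeta i)
     = mbar s K delta sigma /\
   forall i, 0 <= mbar s K delta sigma * (mass zeta)^-1 * zeta i).
Proof.
move=> n_ge2 B_N1 zeta_gt0 A_zeta _ G_gt0 K_gt0 d_gt0 hs _ _ [_ [_ [mass_ge0 X_ode]]].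
have dX (t : R) : 0 < t -> forall i, is_derive t 1 (X i)
    (phi s Gamma K delta sigma (mass (X^~ t)) * X i t
     + \sum_(j < n) Amat B i j * X j t).
  by move=> t_gt0 i; have [dXi <-] := X_ode t t_gt0 i; rewrite derive1E; exact: derivableP.
have mass_gt0 (t : R) : 0 < t -> 0 < mass (X^~ t) by move=> t_gt0; exact/mass_ge0/ltW.
have zeta_mass_gt0 : 0 < mass zeta.
  rewrite /mass (bigD1 (Ordinal n_ge2)) //= ltr_pwDl ?zeta_gt0 // sumr_ge0 // => i _.
  exact/ltW.
have mb_gt0 := mbar_gt0 s sigma K_gt0 d_gt0.
have A_col0 := Amat_col_sum0 B_N1.
have M_cvg := cvg_relaxes_to mb_gt0 (phi_relaxes_to_mbar G_gt0 K_gt0 d_gt0 hs)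
  mass_gt0 (is_derive_mass A_col0 dX).
have Y_cvg := profile_cvg A_zeta A_col0 zeta_gt0 (Amat_offdiag_ge0 B_N1)
  (Amat_connect B_N1) zeta_mass_gt0 (is_derive_profile A_col0 dX mass_gt0)
  (profile_sum1 mass_gt0).
split=> [i|].
  rewrite mulrAC -mulrA; apply: cvg_pinfty_eq (cvgM M_cvg (Y_cvg i)) => t t1.
  by rewrite mulrC divfK // gt_eqF // mass_gt0 // (lt_le_trans ltr01).
split=> [|i]; last by rewrite !mulr_ge0 ?invr_ge0 ?ltW.
by rewrite /mass -mulr_sumr -mulrA mulVf ?mulr1 // gt_eqF.
Qed.
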